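(* Both $\mathcal{P}$ and $\overline{\mathcal{P}}$ are $(1,1,2)$-quasi-balanced, i.e. if $(a,s,p)$ belongs to the set and $z\in\Delta$ then $(za,zs,z^2p)$ belongs to the set; both are starlike about $(0,0,0)$, i.e. if $x$ belongs to the set and $0\le r\le 1$ then $rx$ belongs to the set. Neither $\mathcal{P}$ nor $\overline{\mathcal{P}}$ is circled, i.e. for each of them there exist a point $x$ of the set and $\omega\in\mathbb{T}$ with $\omega x$ not in the set.
   Context: $\Delta$ is the closed unit disc and $\mathbb{T}$ the unit circle. $\mathbb{B}$ is the open unit ball of $\mathbb{C}^{2\times 2}$ (operator norm), $\pi(A)=(a_{21},\operatorname{tr}A,\det A)$, $\mathcal{P}=\pi(\mathbb{B})$, $\overline{\mathcal{P}}$ its closure. *)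

From Stdlib Require Import Reals.
Open Scope R_scope.

Record C := mkC { re : R; im : R }.
Definition Cadd (z w : C) : C := mkC (re z + re w) (im z + im w).
Definition Csub (z w : C) : C := mkC (re z - re w) (im z - im w).
Definition Cmul (z w : C) : C :=
  mkC (re z * re w - im z * im w) (re z * im w + im z * re w).
Definition RtoC (r : R) : C := mkC r 0.
Definition Cnorm2 (z : C) : R := re z * re z + im z * im z.

Definition in_Delta (z : C) : Prop := Cnorm2 z <= 1.
Definition in_T (z : C) : Prop := Cnorm2 z = 1.

Record C2 := mkC2 { v1 : C; v2 : C }.
Definition C2norm2 (v : C2) : R := Cnorm2 (v1 v) + Cnorm2 (v2 v).
Record M2 := mkM2 { a11 : C; a12 : C; a21 : C; a22 : C }.
Definition Mapply (A : M2) (v : C2) : C2 :=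
  mkC2 (Cadd (Cmul (a11 A) (v1 v)) (Cmul (a12 A) (v2 v)))
       (Cadd (Cmul (a21 A) (v1 v)) (Cmul (a22 A) (v2 v))).
Definition Mtr (A : M2) : C := Cadd (a11 A) (a22 A).
Definition Mdet (A : M2) : C := Csub (Cmul (a11 A) (a22 A)) (Cmul (a12 A) (a21 A)).

Definition opnorm_le (A : M2) (c : R) : Prop :=
  forall v : C2, C2norm2 (Mapply A v) <= c * c * C2norm2 v.

(* open unit ball B of C^{2x2} in operator norm: ||A|| < 1, i.e.
   ||A|| <= c for some c < 1 (the operator norm is the least such bound) *)
Definition in_B (A : M2) : Prop := exists c : R, 0 <= c < 1 /\ opnorm_le A c.

Record C3 := mkC3 { x1 : C; x2 : C; x3 : C }.
Definition C3dist2 (x y : C3) : R :=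
  Cnorm2 (Csub (x1 x) (x1 y)) + Cnorm2 (Csub (x2 x) (x2 y)) + Cnorm2 (Csub (x3 x) (x3 y)).
Definition C3scale (w : C) (x : C3) : C3 :=
  mkC3 (Cmul w (x1 x)) (Cmul w (x2 x)) (Cmul w (x3 x)).
Definition qb_act (z : C) (x : C3) : C3 :=
  mkC3 (Cmul z (x1 x)) (Cmul z (x2 x)) (Cmul (Cmul z z) (x3 x)).

Definition piA (A : M2) : C3 := mkC3 (a21 A) (Mtr A) (Mdet A).

Definition in_P (x : C3) : Prop := exists A : M2, in_B A /\ piA A = x.
Definition in_Pbar (x : C3) : Prop :=
  forall eps : R, 0 < eps -> exists y : C3, in_P y /\ C3dist2 x y < eps.

Definition quasi_balanced_112 (S : C3 -> Prop) : Prop :=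
  forall x z, S x -> in_Delta z -> S (qb_act z x).
Definition starlike0 (S : C3 -> Prop) : Prop :=
  forall x r, S x -> 0 <= r <= 1 -> S (C3scale (RtoC r) x).
Definition circled (S : C3 -> Prop) : Prop :=
  forall x w, S x -> in_T w -> S (C3scale w x).

(* Multiplying a matrix of the ball by z with |z| <= 1 keeps it in the ball and
   acts on pi as (a, s, p) |-> (z a, z s, z^2 p); this action is 1-Lipschitz, so
   quasi-balance passes to the closure.  For starlikeness, A lies in the ball iff
   |det A| < 1 and |A|_F^2 < 1 + |det A|^2 (largest eigenvalue of A^* A below 1).
   Replacing a12, a21 by t a12, t a21 and the diagonal by (t tr A +- X)/2, where
   X^2 = t^2 (a11 - a22)^2 - 4 (1 - t^2) det A, keeps the determinant and does not
   increase the Frobenius norm, so (t a21, t tr A, det A) lies in P; scaling by t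
   then gives t^2 pi(A).  Circledness fails at x0 = pi(9/10 I) = (0, 9/5, 81/100):
   since s^2 - 4p = (a11 - a22)^2 + 4 a12 a21, every point of P has
   Re (s^2 - 4p) < 4 + 4 |a|, which fails near -x0. *)

From Pilot Require Import Defs.
From Stdlib Require Import Reals Lra Psatz.
Open Scope R_scope.

Definition Cconj (z : Defs.C) : Defs.C := mkC (re z) (- im z).

Lemma Cnorm2_ge0 (z : Defs.C) : 0 <= Cnorm2 z.
Proof. unfold Cnorm2. nra. Qed.

Lemma Cnorm2_mul (z w : Defs.C) : Cnorm2 (Cmul z w) = Cnorm2 z * Cnorm2 w.
Proof. unfold Cnorm2, Cmul; simpl; ring. Qed.

Lemma Cnorm2_le_of_sqr (z : Defs.C) (k : R) :
  0 <= k -> Cnorm2 (Cmul z z) <= k * k -> Cnorm2 z <= k.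
Proof.
  intros Hk Hzz. rewrite Cnorm2_mul in Hzz.
  apply Rsqr_incr_0_var; unfold Rsqr; lra.
Qed.

Lemma Cnorm2_add_le (z w : Defs.C) (k1 k2 : R) :
  0 <= k1 -> 0 <= k2 -> Cnorm2 z <= k1 * k1 -> Cnorm2 w <= k2 * k2 ->
  Cnorm2 (Cadd z w) <= (k1 + k2) * (k1 + k2).
Proof.
  destruct z as [zr zi], w as [wr wi]; unfold Cnorm2, Cadd; simpl.
  intros Hk1 Hk2 Hz Hw.
  assert (Hcs : (zr*wr + zi*wi) * (zr*wr + zi*wi) <= (k1*k2) * (k1*k2)).
  { assert (Hlag : (zr*wr + zi*wi) * (zr*wr + zi*wi) + (zr*wi - zi*wr) * (zr*wi - zi*wr)
                   = (zr*zr + zi*zi) * (wr*wr + wi*wi)) by ring.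
    assert ((zr*zr + zi*zi) * (wr*wr + wi*wi) <= (k1*k1) * (k2*k2))
      by (apply Rmult_le_compat; nra).
    pose proof (Rle_0_sqr (zr*wi - zi*wr)). unfold Rsqr in *. lra. }
  assert (zr*wr + zi*wi <= k1 * k2)
    by (apply Rsqr_incr_0_var; unfold Rsqr; nra).
  nra.
Qed.

Lemma Csqrt_exists (z : Defs.C) : exists w : Defs.C, Cmul w w = z.
Proof.
  destruct z as [u v].
  set (m := sqrt (u*u + v*v)).
  assert (Hm : m * m = u*u + v*v) by (apply sqrt_sqrt; nra).
  assert (Hm0 : 0 <= m) by apply sqrt_pos.
  assert (Hmu : - m <= u <= m) by (split; nra).
  set (X := sqrt ((m + u) / 2)). set (Y := sqrt ((m - u) / 2)).
  assert (HX : X * X = (m + u) / 2) by (apply sqrt_sqrt; lra).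
  assert (HY : Y * Y = (m - u) / 2) by (apply sqrt_sqrt; lra).
  assert (HXY0 : 0 <= 2 * X * Y)
    by (apply Rmult_le_pos; [apply Rmult_le_pos; [lra | apply sqrt_pos] | apply sqrt_pos]).
  assert (HXY : (2*X*Y) * (2*X*Y) = v * v)
    by (replace ((2*X*Y) * (2*X*Y)) with (4 * (X*X) * (Y*Y)) by ring; rewrite HX, HY; nra).
  destruct (Rle_or_lt 0 v) as [Hv | Hv].
  - exists (mkC X Y). unfold Cmul; simpl. f_equal; nra.
  - exists (mkC X (- Y)). unfold Cmul; simpl. f_equal; nra.
Qed.

Definition herm_form (al be : R) (h : Defs.C) (v : C2) : R :=
  al * Cnorm2 (v1 v) + be * Cnorm2 (v2 v) - 2 * re (Cmul (Cconj (v1 v)) (Cmul h (v2 v))).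

Lemma herm_form_nonneg_iff (al be : R) (h : Defs.C) :
  (forall v, 0 <= herm_form al be h v) <-> 0 <= al /\ 0 <= be /\ Cnorm2 h <= al * be.
Proof.
  destruct h as [hr hi]. unfold herm_form, Cnorm2, Cconj, Cmul; simpl. split.
  - intros H.
    assert (Hal : 0 <= al) by (specialize (H (mkC2 (mkC 1 0) (mkC 0 0))); simpl in H; lra).
    assert (Hbe : 0 <= be) by (specialize (H (mkC2 (mkC 0 0) (mkC 1 0))); simpl in H; lra).
    split; [exact Hal | split; [exact Hbe |]].
    destruct Hal as [Hal | <-].
    + specialize (H (mkC2 (mkC hr hi) (mkC al 0))); simpl in H.
      assert (0 <= al * (al*be - (hr*hr + hi*hi))) by (ring_simplify; ring_simplify in H; lra).
      assert (0 <= al*be - (hr*hr + hi*hi)) by (apply (Rmult_le_reg_l al); lra).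
      lra.
    + destruct (Rlt_or_le 0 (hr*hr + hi*hi)) as [Hh | Hh]; [| lra].
      set (k := (be + 1) / (hr*hr + hi*hi)).
      assert (Hk : k * (hr*hr + hi*hi) = be + 1) by (unfold k; field; lra).
      specialize (H (mkC2 (mkC (k*hr) (k*hi)) (mkC 1 0))); simpl in H. nra.
  - intros [Hal [Hbe Hh]] [[x1 y1] [x2 y2]]; simpl.
    destruct Hal as [Hal | <-].
    + apply (Rmult_le_reg_l al); [exact Hal |]. rewrite Rmult_0_r.
      match goal with |- 0 <= ?E =>
        replace E with ((al*x1 - (hr*x2 - hi*y2))^2 + (al*y1 - (hr*y2 + hi*x2))^2
                        + (al*be - (hr*hr + hi*hi)) * (x2*x2 + y2*y2)) by ring end.
      assert (0 <= (al*be - (hr*hr + hi*hi)) * (x2*x2 + y2*y2)) by (apply Rmult_le_pos; nra).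
      pose proof (pow2_ge_0 (al*x1 - (hr*x2 - hi*y2))).
      pose proof (pow2_ge_0 (al*y1 - (hr*y2 + hi*x2))). lra.
    + assert (hr = 0) by nra. assert (hi = 0) by nra. subst. nra.
Qed.

Definition gram11 (A : M2) : R := Cnorm2 (a11 A) + Cnorm2 (a21 A).
Definition gram22 (A : M2) : R := Cnorm2 (a12 A) + Cnorm2 (a22 A).
Definition gram12 (A : M2) : Defs.C :=
  Cadd (Cmul (Cconj (a11 A)) (a12 A)) (Cmul (Cconj (a21 A)) (a22 A)).
Definition frob2 (A : M2) : R :=
  Cnorm2 (a11 A) + Cnorm2 (a12 A) + Cnorm2 (a21 A) + Cnorm2 (a22 A).

Lemma frob2_gram (A : M2) : frob2 A = gram11 A + gram22 A.
Proof. unfold frob2, gram11, gram22. ring. Qed.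

Lemma gram_det (A : M2) : gram11 A * gram22 A - Cnorm2 (gram12 A) = Cnorm2 (Mdet A).
Proof.
  destruct A as [[a b] [c d] [e f] [g h]].
  unfold gram11, gram22, gram12, Mdet, Cnorm2, Cconj, Cadd, Csub, Cmul; simpl. ring.
Qed.

Lemma opnorm_gap (A : M2) (c : R) (v : C2) :
  c * c * C2norm2 v - C2norm2 (Mapply A v)
  = herm_form (c * c - gram11 A) (c * c - gram22 A) (gram12 A) v.
Proof.
  destruct A as [[a b] [c' d] [e f] [g h]], v as [[x1 y1] [x2 y2]].
  unfold herm_form, gram11, gram22, gram12, C2norm2, Mapply, Cnorm2, Cconj, Cadd, Cmul; simpl.
  ring.
Qed.

Lemma opnorm_le_iff (A : M2) (c : R) :
  opnorm_le A c <->
  gram11 A <= c * c /\ gram22 A <= c * c /\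
  Cnorm2 (gram12 A) <= (c * c - gram11 A) * (c * c - gram22 A).
Proof.
  assert (Hiff : opnorm_le A c <->
            forall v, 0 <= herm_form (c * c - gram11 A) (c * c - gram22 A) (gram12 A) v).
  { unfold opnorm_le. split; intros H v; specialize (H v); rewrite <- opnorm_gap in *; lra. }
  rewrite Hiff, herm_form_nonneg_iff. lra.
Qed.

Lemma max_eigenvalue_lt_1_iff (g11 g22 q : R) :
  0 <= g11 -> 0 <= g22 -> 0 <= q ->
  (exists l, 0 <= l < 1 /\ g11 <= l /\ g22 <= l /\ q <= (l - g11) * (l - g22)) <->
  g11 * g22 - q < 1 /\ g11 + g22 < 1 + (g11 * g22 - q).
Proof.
  intros H11 H22 Hq. split.
  - intros [l [Hl [H1 [H2 Hql]]]].
    assert (g11 * g22 <= l * l) by (apply Rmult_le_compat; lra).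
    assert (1 + (g11 * g22 - q) - (g11 + g22) >= (1 - l) * (1 + l - (g11 + g22))) by nra.
    assert (0 < (1 - l) * (1 + l - (g11 + g22))) by (apply Rmult_lt_0_compat; lra).
    assert (l * l <= l * 1) by (apply Rmult_le_compat_l; lra).
    split; lra.
  - intros [HD HT].
    (* l is the larger root of l^2 - (g11 + g22) l + (g11 g22 - q) *)
    set (S := sqrt ((g11 - g22) * (g11 - g22) + 4 * q)).
    assert (HS : S * S = (g11 - g22) * (g11 - g22) + 4 * q)
      by (apply sqrt_sqrt; pose proof (Rle_0_sqr (g11 - g22)); unfold Rsqr in *; lra).
    assert (HS0 : 0 <= S) by apply sqrt_pos.
    assert (HS1 : S < 2 - (g11 + g22)).
    { destruct (Rlt_or_le S (2 - (g11 + g22))) as [| Hle]; [assumption |].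
      assert ((2 - (g11 + g22)) * (2 - (g11 + g22)) <= S * S)
        by (apply Rmult_le_compat; lra).
      nra. }
    assert (g11 - g22 <= S) by (apply Rsqr_incr_0_var; unfold Rsqr; nra).
    assert (g22 - g11 <= S) by (apply Rsqr_incr_0_var; unfold Rsqr; nra).
    exists ((g11 + g22 + S) / 2).
    repeat split; nra.
Qed.

Lemma gram_nonneg (A : M2) : 0 <= gram11 A /\ 0 <= gram22 A.
Proof.
  unfold gram11, gram22.
  pose proof (Cnorm2_ge0 (a11 A)). pose proof (Cnorm2_ge0 (a12 A)).
  pose proof (Cnorm2_ge0 (a21 A)). pose proof (Cnorm2_ge0 (a22 A)). lra.
Qed.

Lemma in_B_iff (A : M2) :
  in_B A <-> Cnorm2 (Mdet A) < 1 /\ frob2 A < 1 + Cnorm2 (Mdet A).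
Proof.
  destruct (gram_nonneg A) as [H11 H22].
  rewrite frob2_gram, <- gram_det,
    <- (max_eigenvalue_lt_1_iff _ _ _ H11 H22 (Cnorm2_ge0 (gram12 A))).
  unfold in_B. split.
  - intros [c [Hc Hop]]. apply opnorm_le_iff in Hop.
    exists (c * c). split; [split; nra | exact Hop].
  - intros [l [Hl Hop]]. exists (sqrt l). split.
    + split; [apply sqrt_pos |]. rewrite <- sqrt_1. apply sqrt_lt_1_alt. lra.
    + apply opnorm_le_iff. rewrite sqrt_sqrt by lra. exact Hop.
Qed.

Lemma in_B_gram_lt_1 (A : M2) : in_B A -> gram11 A < 1 /\ gram22 A < 1.
Proof.
  intros [c [Hc Hop]]. apply opnorm_le_iff in Hop.
  assert (c * c < 1) by nra. lra.
Qed.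

Lemma det_le_frob2 (A : M2) : 4 * Cnorm2 (Mdet A) <= frob2 A * frob2 A.
Proof.
  rewrite <- gram_det, frob2_gram.
  pose proof (Cnorm2_ge0 (gram12 A)). pose proof (pow2_ge_0 (gram11 A - gram22 A)). nra.
Qed.

Definition compress (t : R) (X : Defs.C) (A : M2) : M2 :=
  mkM2 (Cmul (RtoC (/ 2)) (Cadd (Cmul (RtoC t) (Mtr A)) X)) (Cmul (RtoC t) (a12 A))
       (Cmul (RtoC t) (a21 A)) (Cmul (RtoC (/ 2)) (Csub (Cmul (RtoC t) (Mtr A)) X)).

Lemma compress_det (t : R) (X : Defs.C) (A : M2) :
  Cmul X X = Cadd (Cmul (RtoC (t * t)) (Cmul (Csub (a11 A) (a22 A)) (Csub (a11 A) (a22 A))))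
                  (Cmul (RtoC (-4 * (1 - t * t))) (Mdet A)) ->
  Mdet (compress t X A) = Mdet A.
Proof.
  destruct X as [xr xi], A as [[a b] [c d] [e f] [g h]].
  unfold compress, Mdet, Mtr, RtoC, Cadd, Csub, Cmul; simpl.
  intros HX. injection HX as Hre Him. f_equal; nra.
Qed.

Lemma compress_frob2 (t : R) (X : Defs.C) (A : M2) :
  frob2 (compress t X A) + t * t * Cnorm2 (Csub (a11 A) (a22 A)) / 2
  = t * t * frob2 A + Cnorm2 X / 2.
Proof.
  destruct X as [xr xi], A as [[a b] [c d] [e f] [g h]].
  unfold compress, frob2, Mtr, Cnorm2, RtoC, Cadd, Csub, Cmul; simpl. field.
Qed.

Lemma Cnorm2_RtoC (r : R) : Cnorm2 (RtoC r) = r * r.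
Proof. unfold Cnorm2, RtoC; simpl. ring. Qed.

Lemma in_B_compress (A : M2) (t : R) :
  in_B A -> 0 <= t <= 1 ->
  exists B, in_B B /\
    piA B = mkC3 (Cmul (RtoC t) (a21 A)) (Cmul (RtoC t) (Mtr A)) (Mdet A).
Proof.
  intros HA Ht. apply in_B_iff in HA as [HD HF].
  set (d := Csub (a11 A) (a22 A)).
  destruct (Csqrt_exists (Cadd (Cmul (RtoC (t * t)) (Cmul d d))
                               (Cmul (RtoC (-4 * (1 - t * t))) (Mdet A)))) as [X HX].
  pose proof (Cnorm2_ge0 d). pose proof (Cnorm2_ge0 (Mdet A)).
  assert (HF0 : 0 <= frob2 A) by (rewrite frob2_gram; pose proof (gram_nonneg A); lra).
  assert (Ht2 : 0 <= 1 - t * t) by nra.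
  assert (HXn : Cnorm2 X <= t * t * Cnorm2 d + 2 * (1 - t * t) * frob2 A).
  { apply Cnorm2_le_of_sqr; [nra |]. rewrite HX.
    apply Cnorm2_add_le; try nra; rewrite !Cnorm2_mul, Cnorm2_RtoC.
    - right. ring.
    - pose proof (det_le_frob2 A).
      replace ((2 * (1 - t * t) * frob2 A) * (2 * (1 - t * t) * frob2 A))
        with (4 * (1 - t * t) * (1 - t * t) * (frob2 A * frob2 A)) by ring.
      replace (-4 * (1 - t * t) * (-4 * (1 - t * t)) * Cnorm2 (Mdet A))
        with (4 * (1 - t * t) * (1 - t * t) * (4 * Cnorm2 (Mdet A))) by ring.
      apply Rmult_le_compat_l; nra. }
  exists (compress t X A). split.
  - apply in_B_iff. rewrite compress_det by exact HX.
    pose proof (compress_frob2 t X A). fold d in H1. nra.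
  - unfold piA. rewrite compress_det by exact HX. f_equal.
    destruct A as [[a b] [c' d'] [e f] [g h]], X as [xr xi].
    unfold compress, Mtr, RtoC, Cadd, Csub, Cmul; simpl. f_equal; field.
Qed.

Definition Mscale (z : Defs.C) (A : M2) : M2 :=
  mkM2 (Cmul z (a11 A)) (Cmul z (a12 A)) (Cmul z (a21 A)) (Cmul z (a22 A)).

Lemma in_B_scale (z : Defs.C) (A : M2) : in_Delta z -> in_B A -> in_B (Mscale z A).
Proof.
  intros Hz [c [Hc Hop]]. exists c. split; [exact Hc |]. intro v.
  assert (E : C2norm2 (Mapply (Mscale z A) v) = Cnorm2 z * C2norm2 (Mapply A v)).
  { destruct z, A as [[] [] [] []], v as [[] []].
    unfold C2norm2, Mapply, Mscale, Cnorm2, Cadd, Cmul; simpl. ring. }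
  rewrite E. specialize (Hop v). unfold in_Delta in Hz.
  assert (0 <= C2norm2 (Mapply A v))
    by (unfold C2norm2; pose proof (Cnorm2_ge0 (v1 (Mapply A v)));
        pose proof (Cnorm2_ge0 (v2 (Mapply A v))); lra).
  pose proof (Cnorm2_ge0 z). nra.
Qed.

Lemma piA_scale (z : Defs.C) (A : M2) : piA (Mscale z A) = qb_act z (piA A).
Proof.
  destruct z, A as [[] [] [] []].
  unfold piA, qb_act, Mscale, Mtr, Mdet, Cadd, Csub, Cmul; simpl. f_equal; f_equal; ring.
Qed.

Lemma Cnorm2_sub_mul_le (z a b : Defs.C) :
  Cnorm2 z <= 1 -> Cnorm2 (Csub (Cmul z a) (Cmul z b)) <= Cnorm2 (Csub a b).
Proof.
  intros Hz. replace (Csub (Cmul z a) (Cmul z b)) with (Cmul z (Csub a b))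
    by (destruct z, a, b; unfold Csub, Cmul; simpl; f_equal; ring).
  rewrite Cnorm2_mul. pose proof (Cnorm2_ge0 (Csub a b)). nra.
Qed.

Lemma C3dist2_qb_act (z : Defs.C) (x y : C3) :
  in_Delta z -> C3dist2 (qb_act z x) (qb_act z y) <= C3dist2 x y.
Proof.
  unfold in_Delta, C3dist2; simpl. intros Hz.
  assert (Hzz : Cnorm2 (Cmul z z) <= 1)
    by (rewrite Cnorm2_mul; pose proof (Cnorm2_ge0 z); nra).
  pose proof (Cnorm2_sub_mul_le z (x1 x) (x1 y) Hz).
  pose proof (Cnorm2_sub_mul_le z (x2 x) (x2 y) Hz).
  pose proof (Cnorm2_sub_mul_le (Cmul z z) (x3 x) (x3 y) Hzz). lra.
Qed.

Lemma C3dist2_scale (w : Defs.C) (x y : C3) :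
  Cnorm2 w <= 1 -> C3dist2 (C3scale w x) (C3scale w y) <= C3dist2 x y.
Proof.
  unfold C3dist2; simpl. intros Hw.
  pose proof (Cnorm2_sub_mul_le w (x1 x) (x1 y) Hw).
  pose proof (Cnorm2_sub_mul_le w (x2 x) (x2 y) Hw).
  pose proof (Cnorm2_sub_mul_le w (x3 x) (x3 y) Hw). lra.
Qed.

Lemma C3dist2_refl (x : C3) : C3dist2 x x = 0.
Proof. unfold C3dist2, Cnorm2, Csub; simpl. ring. Qed.

Lemma in_P_Pbar (x : C3) : in_P x -> in_Pbar x.
Proof. intros Hx eps He. exists x. rewrite C3dist2_refl. auto. Qed.

Lemma in_Pbar_image (f : C3 -> C3) :
  (forall x, in_P x -> in_P (f x)) ->
  (forall x y, C3dist2 (f x) (f y) <= C3dist2 x y) ->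
  forall x, in_Pbar x -> in_Pbar (f x).
Proof.
  intros HfP Hlip x Hx eps He. destruct (Hx eps He) as [y [Hy Hd]].
  exists (f y). split; [exact (HfP y Hy) |]. specialize (Hlip x y). lra.
Qed.

Lemma quasi_balanced_P : quasi_balanced_112 in_P.
Proof.
  intros x z [A [HA <-]] Hz. exists (Mscale z A).
  split; [exact (in_B_scale z A Hz HA) | apply piA_scale].
Qed.

Lemma quasi_balanced_Pbar : quasi_balanced_112 in_Pbar.
Proof.
  intros x z Hx Hz. apply (in_Pbar_image (qb_act z)); [| | exact Hx].
  - intros y Hy. exact (quasi_balanced_P y z Hy Hz).
  - intros. exact (C3dist2_qb_act z _ _ Hz).
Qed.

Lemma starlike_P : starlike0 in_P.
Proof.
  intros x r [A [HA <-]] Hr.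
  set (t := sqrt r).
  assert (Ht : t * t = r) by (apply sqrt_sqrt; lra).
  assert (Ht01 : 0 <= t <= 1)
    by (split; [apply sqrt_pos | unfold t; rewrite <- sqrt_1; apply sqrt_le_1_alt; lra]).
  (* compress by t, then scale by t: each of a21, tr, det picks up t^2 = r *)
  destruct (in_B_compress A t HA Ht01) as [B [HB HpiB]].
  exists (Mscale (RtoC t) B). split.
  - apply in_B_scale; [unfold in_Delta; rewrite Cnorm2_RtoC; nra | exact HB].
  - rewrite piA_scale, HpiB, <- Ht. destruct A as [[] [] [] []].
    unfold qb_act, C3scale, piA, Mtr, Mdet, RtoC, Cadd, Csub, Cmul; simpl. f_equal; f_equal; ring.
Qed.

Lemma starlike_Pbar : starlike0 in_Pbar.
Proof.
  intros x r Hx Hr. apply (in_Pbar_image (C3scale (RtoC r))); [| | exact Hx].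
  - intros y Hy. exact (starlike_P y r Hy Hr).
  - intros. apply C3dist2_scale. rewrite Cnorm2_RtoC. nra.
Qed.

Definition disc (x : C3) : Defs.C := Csub (Cmul (x2 x) (x2 x)) (Cmul (RtoC 4) (x3 x)).

Lemma disc_piA (A : M2) :
  disc (piA A) = Cadd (Cmul (Csub (a11 A) (a22 A)) (Csub (a11 A) (a22 A)))
                      (Cmul (RtoC 4) (Cmul (a12 A) (a21 A))).
Proof.
  destruct A as [[] [] [] []].
  unfold disc, piA, Mtr, Mdet, RtoC, Cadd, Csub, Cmul; simpl. f_equal; ring.
Qed.

Lemma in_P_re_disc_lt (x : C3) : in_P x -> re (disc x) < 4 + 4 * sqrt (Cnorm2 (x1 x)).
Proof.
  intros [A [HA <-]]. destruct (in_B_gram_lt_1 A HA) as [H1 H2].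
  rewrite disc_piA. destruct A as [[a b] [c d] [e f] [g h]].
  unfold gram11, gram22, piA, Cnorm2, RtoC, Cadd, Csub, Cmul in *; simpl in *.
  assert (Hoff : c*e - d*f <= sqrt (e*e + f*f)).
  { apply Rsqr_incr_0_var; [| apply sqrt_pos]. unfold Rsqr.
    rewrite sqrt_sqrt by nra.
    assert (Hlag : (c*e - d*f) * (c*e - d*f) + (c*f + d*e) * (c*f + d*e)
                   = (c*c + d*d) * (e*e + f*f)) by ring.
    assert ((c*c + d*d) * (e*e + f*f) <= 1 * (e*e + f*f)) by (apply Rmult_le_compat_r; nra).
    pose proof (Rle_0_sqr (c*f + d*e)). unfold Rsqr in *. lra. }
  assert (a*a + g*g < 2) by nra.
  pose proof (Rle_0_sqr (a + g)). pose proof (Rle_0_sqr (b - h)). unfold Rsqr in *.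
  lra.
Qed.

Definition x0 : C3 := mkC3 (mkC 0 0) (mkC (9/5) 0) (mkC (81/100) 0).

Lemma in_P_x0 : in_P x0.
Proof.
  exists (mkM2 (mkC (9/10) 0) (mkC 0 0) (mkC 0 0) (mkC (9/10) 0)). split.
  - apply in_B_iff. unfold frob2, Mdet, Cnorm2, Csub, Cmul; simpl. lra.
  - unfold piA, x0, Mtr, Mdet, Cadd, Csub, Cmul; simpl. f_equal; f_equal; lra.
Qed.

(* disc (-x0) = 162/25, while points of P near -x0 have real discriminant below 4 + 4/10 *)
Lemma notin_Pbar_opp_x0 : ~ in_Pbar (C3scale (mkC (-1) 0) x0).
Proof.
  intros H. destruct (H (1/100) ltac:(lra)) as [y [Hy Hd]].
  pose proof (in_P_re_disc_lt y Hy) as Hdisc.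
  destruct y as [[ur ui] [sr si] [pr pi]].
  replace (C3dist2 (C3scale (mkC (-1) 0) x0) (mkC3 (mkC ur ui) (mkC sr si) (mkC pr pi)))
    with (ur*ur + ui*ui + ((sr + 9/5) * (sr + 9/5) + si*si)
          + ((pr + 81/100) * (pr + 81/100) + pi*pi)) in Hd
    by (unfold C3dist2, C3scale, x0, Cnorm2, Csub, Cmul; simpl; ring).
  unfold disc, Cnorm2, RtoC, Csub, Cmul in Hdisc; simpl in Hdisc.
  pose proof (Rle_0_sqr (sr + 9/5)). pose proof (Rle_0_sqr si).
  pose proof (Rle_0_sqr (pr + 81/100)). pose proof (Rle_0_sqr pi).
  pose proof (Rle_0_sqr ur). pose proof (Rle_0_sqr ui). unfold Rsqr in *.
  assert (Hu : sqrt (ur*ur + ui*ui) <= 1/10).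
  { apply Rsqr_incr_0_var; [| lra]. unfold Rsqr. rewrite sqrt_sqrt; lra. }
  nra.
Qed.

Theorem theorem6p2 :
  quasi_balanced_112 in_P /\ quasi_balanced_112 in_Pbar /\
  starlike0 in_P /\ starlike0 in_Pbar /\
  (exists x w, in_P x /\ in_T w /\ ~ in_P (C3scale w x)) /\
  (exists x w, in_Pbar x /\ in_T w /\ ~ in_Pbar (C3scale w x)).
Proof.
  assert (HT : in_T (mkC (-1) 0)) by (unfold in_T, Cnorm2; simpl; ring).
  split; [exact quasi_balanced_P |].
  split; [exact quasi_balanced_Pbar |].
  split; [exact starlike_P |].
  split; [exact starlike_Pbar |].
  split.
  - exists x0, (mkC (-1) 0). split; [exact in_P_x0 |]. split; [exact HT |].
    intros HP. exact (notin_Pbar_opp_x0 (in_P_Pbar _ HP)).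
  - exists x0, (mkC (-1) 0). split; [exact (in_P_Pbar _ in_P_x0) |].
    split; [exact HT | exact notin_Pbar_opp_x0].
Qed.
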